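(* Let $G$ be a connected graph on $n\ge2$ vertices, $\alpha\in\mathbb{R}$, with vertices labeled so that $({}^\alpha\mathbb{M})_1\ge\cdots\ge({}^\alpha\mathbb{M})_n$. Let $T=\min_{1\le i\ne j\le n}d_{ij}\mathbb{D}_j^\alpha/\mathbb{D}_i^\alpha$. Then \[\rho(\mathbb{D}(G))\ge \frac{({}^\alpha\mathbb{M})_n-T+\sqrt{(({}^\alpha\mathbb{M})_n+T)^2+4T\sum_{k=1}^{n-1}\big(({}^\alpha\mathbb{M})_k-({}^\alpha\mathbb{M})_n\big)}}{2}.\] Equality holds if and only if $({}^\alpha\mathbb{M})_1=\cdots=({}^\alpha\mathbb{M})_n$, or for some $2\le t\le n$: (i) $d_{kl}\mathbb{D}_l^\alpha/\mathbb{D}_k^\alpha=T$ for all $1\le k\le n$, $1\le l\le t-1$, $k\ne l$; (ii) $({}^\alpha\mathbb{M})_t=\cdots=({}^\alpha\mathbb{M})_n$.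
   Context: $\mathbb{D}(G)=(d_{ij})$ is the distance matrix of $G$, $\mathbb{D}_i=\sum_j d_{ij}$ the transmission of $v_i$, and $({}^\alpha\mathbb{M})_i=\frac{\sum_{j=1}^n d_{ij}\mathbb{D}_j^\alpha}{\mathbb{D}_i^\alpha}$ the generalized average transmission. $\rho$ is the spectral radius. *)

From Stdlib Require Import Reals Lra Lia List Arith.
Import ListNotations.
Open Scope R_scope.

Definition simple_graph (n : nat) (adj : nat -> nat -> bool) : Prop :=
  (forall i j, (i < n)%nat -> (j < n)%nat -> adj i j = adj j i) /\
  (forall i, (i < n)%nat -> adj i i = false).

Fixpoint walkb (n : nat) (adj : nat -> nat -> bool) (k i j : nat) : bool :=
  match k with
  | O => Nat.eqb i j
  | S k' => existsb (fun m => andb (adj i m) (walkb n adj k' m j)) (seq 0 n)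
  end.

Definition connected (n : nat) (adj : nat -> nat -> bool) : Prop :=
  forall i j, (i < n)%nat -> (j < n)%nat -> exists k, walkb n adj k i j = true.

(* least k in [0, bound) with a walk of length k from i to j (bound if none) *)
Fixpoint first_walk (n : nat) (adj : nat -> nat -> bool) (i j k fuel : nat) : nat :=
  match fuel with
  | O => k
  | S f => if walkb n adj k i j then k else first_walk n adj i j (S k) f
  end.

(* graph distance d_ij (shortest walk length; in a connected graph on n vertices
   it is < n) *)
Definition dist (n : nat) (adj : nat -> nat -> bool) (i j : nat) : nat :=
  first_walk n adj i j 0 n.

Definition sumR (n : nat) (f : nat -> R) : R :=
  fold_right Rplus 0 (map f (seq 0 n)).

Definition Dmat (n : nat) (adj : nat -> nat -> bool) (i j : nat) : R :=
  INR (dist n adj i j).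

Definition transmission (n : nat) (adj : nat -> nat -> bool) (i : nat) : R :=
  sumR n (fun j => Dmat n adj i j).

Definition gen_avg_trans (n : nat) (adj : nat -> nat -> bool) (a : R) (i : nat) : R :=
  sumR n (fun j => Dmat n adj i j * Rpower (transmission n adj j) a)
  / Rpower (transmission n adj i) a.

Definition qratio (n : nat) (adj : nat -> nat -> bool) (a : R) (i j : nat) : R :=
  Dmat n adj i j * Rpower (transmission n adj j) a / Rpower (transmission n adj i) a.

Definition list_min (l : list R) : R := fold_right Rmin (hd 0 l) l.

Definition Tmin (n : nat) (adj : nat -> nat -> bool) (a : R) : R :=
  list_min (flat_map (fun i => map (fun j => qratio n adj a i j)
                         (filter (fun j => negb (Nat.eqb i j)) (seq 0 n)))
                     (seq 0 n)).

Definition is_eigenvalue (n : nat) (A : nat -> nat -> R) (lam : R) : Prop :=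
  exists v : nat -> R, (exists i, (i < n)%nat /\ v i <> 0) /\
    forall i, (i < n)%nat -> sumR n (fun j => A i j * v j) = lam * v i.

(* rho is the spectral radius of A: the supremum of |lam| over eigenvalues
   (A is real symmetric here, so all eigenvalues are real) *)
Definition is_spectral_radius (n : nat) (A : nat -> nat -> R) (rho : R) : Prop :=
  is_lub (fun r => exists lam, is_eigenvalue n A lam /\ r = Rabs lam) rho.

From Pilot Require Import Defs.
From Stdlib Require Import Reals List Arith Lra Lia Classical Wf_nat Bool.
From mathcomp Require all_boot all_order all_algebra all_classical all_reals
  all_analysis Rstruct Rstruct_topology.
Open Scope R_scope.

(* Write x_i = D_i^alpha, B_ij = d_ij x_j / x_i (so B is diagonally similar to
   the distance matrix D and has row sums M_i = (^alpha M)_i), T = min_{i<>j}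
   B_ij, and let b be the claimed bound, i.e. the positive root of
   b (b + T) = M_n b + T (M_n + S) with S = sum_{k<n} (M_k - M_n).
   For the test vector z_j = 1 + (M_j - M_n) / (b + T) one computes
   (B z)_i = b z_i + E_i / (b + T), where the slack
   E_i = sum_{j<>i} (B_ij - T)(M_j - M_n) is nonnegative.  Hence y = x z is a
   positive vector with D y >= b y componentwise.

   Two general facts about real symmetric (resp. nonnegative) matrices finish
   the proof:
   - (Rayleigh) if A is symmetric, y > 0 and A y >= b y, then b <= rho(A),
     and b = rho(A) forces A y = b y.  The maximum of the Rayleigh quotient is
     attained by compactness and is an eigenvalue by a first-variation argument.
   - (Collatz-Wielandt) if A >= 0 has a positive eigenvector for b, every
     eigenvalue satisfies |lambda| <= b, so rho(A) <= b.
   Equality rho = b thus holds iff D y = b y, i.e. iff every slack E_i vanishes,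
   and this is exactly the combinatorial condition of the theorem. *)

Lemma sumR_S n f : sumR (S n) f = sumR n f + f n.
Proof.
  unfold sumR. rewrite seq_S, map_app, fold_right_app. simpl.
  generalize (map f (seq 0 n)). intros l.
  induction l as [|x l IH]; simpl; [lra | rewrite IH; lra].
Qed.

Lemma sumR_ext n f g : (forall i, (i < n)%nat -> f i = g i) -> sumR n f = sumR n g.
Proof.
  induction n; intros H; [reflexivity|].
  rewrite !sumR_S, IHn by (intros; apply H; lia). rewrite H by lia. reflexivity.
Qed.

Lemma sumR_plus n f g : sumR n (fun i => f i + g i) = sumR n f + sumR n g.
Proof. induction n; [unfold sumR; simpl; lra|]. rewrite !sumR_S, IHn. lra. Qed.

Lemma sumR_minus n f g : sumR n (fun i => f i - g i) = sumR n f - sumR n g.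
Proof. induction n; [unfold sumR; simpl; lra|]. rewrite !sumR_S, IHn. lra. Qed.

Lemma sumR_scal n c f : sumR n (fun i => c * f i) = c * sumR n f.
Proof. induction n; [unfold sumR; simpl; lra|]. rewrite !sumR_S, IHn. lra. Qed.

Lemma sumR_zero n : sumR n (fun _ => 0) = 0.
Proof. induction n; [reflexivity|]. rewrite sumR_S, IHn. lra. Qed.

Lemma sumR_le n f g : (forall i, (i < n)%nat -> f i <= g i) -> sumR n f <= sumR n g.
Proof.
  induction n; intros H; [unfold sumR; simpl; lra|].
  rewrite !sumR_S. assert (f n <= g n) by (apply H; lia).
  assert (sumR n f <= sumR n g) by (apply IHn; intros; apply H; lia). lra.
Qed.

Lemma sumR_nonneg n f : (forall i, (i < n)%nat -> 0 <= f i) -> 0 <= sumR n f.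
Proof. intros H. rewrite <- (sumR_zero n). apply sumR_le. exact H. Qed.

Lemma sumR_ge_term n f i :
  (forall i, (i < n)%nat -> 0 <= f i) -> (i < n)%nat -> f i <= sumR n f.
Proof.
  induction n; intros H Hi; [lia|].
  rewrite sumR_S. destruct (Nat.eq_dec i n) as [->|Hne].
  - assert (0 <= sumR n f) by (apply sumR_nonneg; intros; apply H; lia). lra.
  - assert (f i <= sumR n f) by (apply IHn; [intros; apply H; lia | lia]).
    assert (0 <= f n) by (apply H; lia). lra.
Qed.

Lemma sumR_zero_each n f : (forall i, (i < n)%nat -> 0 <= f i) -> sumR n f = 0 ->
  forall i, (i < n)%nat -> f i = 0.
Proof.
  intros H H0 i Hi. assert (f i <= sumR n f) by (apply sumR_ge_term; auto).
  assert (0 <= f i) by auto. lra.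
Qed.

Lemma sumR_delta n i c : (i < n)%nat ->
  sumR n (fun j => if Nat.eqb i j then c j else 0) = c i.
Proof.
  induction n; intros Hi; [lia|]. rewrite sumR_S.
  destruct (Nat.eq_dec i n) as [->|Hne].
  - rewrite Nat.eqb_refl, (sumR_ext n _ (fun _ => 0)), sumR_zero; [lra|].
    intros j Hj. destruct (Nat.eqb_spec n j); [lia|reflexivity].
  - rewrite IHn by lia. destruct (Nat.eqb_spec i n); [lia|lra].
Qed.

Lemma sumR_abs n f : Rabs (sumR n f) <= sumR n (fun i => Rabs (f i)).
Proof.
  induction n; [unfold sumR; simpl; rewrite Rabs_R0; lra|].
  rewrite !sumR_S. eapply Rle_trans; [apply Rabs_triang|]. lra.
Qed.

Lemma argmax n (f : nat -> R) : (0 < n)%nat ->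
  exists i0, (i0 < n)%nat /\ forall i, (i < n)%nat -> f i <= f i0.
Proof.
  induction n; intros Hn; [lia|].
  destruct (Nat.eq_dec n 0) as [->|Hne].
  - exists 0%nat. split; [lia|]. intros i Hi. replace i with 0%nat by lia. lra.
  - destruct IHn as [i1 [Hi1 Hm]]; [lia|].
    destruct (Rle_dec (f n) (f i1)).
    + exists i1. split; [lia|]. intros i Hi.
      destruct (Nat.eq_dec i n) as [->|]; [lra|]. apply Hm; lia.
    + exists n. split; [lia|]. intros i Hi. destruct (Nat.eq_dec i n) as [->|]; [lra|].
      assert (f i <= f i1) by (apply Hm; lia). lra.
Qed.

Definition Nq n (v : nat -> R) := sumR n (fun i => v i * v i).
Definition Qf n (A : nat -> nat -> R) (v : nat -> R) :=
  sumR n (fun i => v i * sumR n (fun j => A i j * v j)).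

(* The compact set on which the Rayleigh quotient is maximised:
   unit vectors with all coordinates in [-1, 1]. *)
Definition unit_in_box n (u : nat -> R) := Nq n u = 1 /\ forall i, -1 <= u i <= 1.

Module RayleighCompact.
Import all_boot all_order all_algebra all_classical all_reals all_analysis
  Rstruct Rstruct_topology.
Import Order.TTheory GRing.Theory Num.Theory.
Import numFieldNormedType.Exports.
Local Open Scope classical_set_scope.
Local Open Scope ring_scope.

Definition coords n (v : 'rV[R]_n) : nat -> R :=
  fun i => match (insub i : option 'I_n) with Some k => v ord0 k | None => 0%R end.

Lemma coords_continuous n i : continuous (fun v : 'rV[R]_n => coords n v i).
Proof.
rewrite /coords; case: (insub i) => [k|]; [exact: coord_continuous | exact: cst_continuous].
Qed.

Lemma sumR_continuous (T : topologicalType) n (F : nat -> T -> R) :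
  (forall i, continuous (F i)) -> continuous (fun x => sumR n (fun i => F i x)).
Proof.
move=> HF; rewrite /sumR; elim: (List.seq 0 n) => [|a l IH] /=; first exact: cst_continuous.
move=> x; exact: (@continuousD R R^o T (F a) _ x (HF a x) (IH x)).
Qed.

Lemma mul_continuous (T : topologicalType) (f g : T -> R) :
  continuous f -> continuous g -> continuous (fun x => Rmult (f x) (g x)).
Proof. move=> cf cg x; exact: (@continuousM R T f g x (cf x) (cg x)). Qed.

Lemma quad_form_max n (A : nat -> nat -> R) (u0 : nat -> R) : unit_in_box n u0 ->
  exists w, unit_in_box n w /\ forall u, unit_in_box n u -> Rle (Qf n A u) (Qf n A w).
Proof.
move=> Hu0.
pose rv (u : nat -> R) : 'rV[R]_n := \row_(k < n) u k.
have coords_rv u i : (i < n)%N -> coords n (rv u) i = u i.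
  move=> Hi; rewrite /coords; case: insubP => [k _ Hk | /negP //]; by rewrite mxE Hk.
have coords_out v i : ~~ (i < n)%N -> coords n v i = 0%R.
  move=> Hi; rewrite /coords; case: insubP => [k Hk _ | //]; by rewrite Hk in Hi.
have coords_ord v (i : 'I_n) : coords n v i = v ord0 i.
  rewrite /coords; case: insubP => [k _ Hk | ]; last by rewrite ltn_ord.
  by congr (v ord0 _); apply: val_inj.
have Nq_rv u : Nq n (coords n (rv u)) = Nq n u.
  by apply: sumR_ext => i /ssrnat.ltP Hi; rewrite coords_rv.
have Qf_rv u : Qf n A (coords n (rv u)) = Qf n A u.
  apply: sumR_ext => i /ssrnat.ltP Hi; rewrite coords_rv //; congr Rmult.
  by apply: sumR_ext => j /ssrnat.ltP Hj; rewrite coords_rv.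
pose K := [set v : 'rV[R]_n | forall i, `[(-1)%R, 1%R]%classic (v ord0 i)] `&`
          [set v | Nq n (coords n v) = 1%R].
have cK : compact K.
  apply: compact_closedI.
    apply: (@rV_compact R n (fun=> `[(-1)%R, 1%R]%classic)) => _.
    exact: segment_compact.
  apply: (@preimage_closed _ _ (fun v : 'rV[R]_n => Nq n (coords n v)) [set x | x = 1%R]).
    move=> v _; apply: sumR_continuous => i; apply: mul_continuous; exact: coords_continuous.
  exact: closed_eq.
have inK u : unit_in_box n u -> K (rv u).
  move=> [HN Hb]; split; last by rewrite /= Nq_rv.
  move=> i /=; rewrite mxE; case: (Hb i) => h1 h2; rewrite in_itv /=.
  by apply/andP; split; apply/RleP.
have K0 : K !=set0 by exists (rv u0); exact: inK.
have cf : {within K, continuous (fun v : 'rV[R]_n => Qf n A (coords n v))}.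
  apply: continuous_subspaceT; apply: sumR_continuous => i; apply: mul_continuous;
    first exact: coords_continuous.
  apply: sumR_continuous => j; apply: mul_continuous; first exact: cst_continuous.
  exact: coords_continuous.
have [c cK' cmax] := compact_EVT_max K0 cK cf.
move: (cK') => /set_mem [cB cN].
exists (coords n c); split.
  split; first exact: cN.
  move=> i; case: (ltnP i n) => Hi.
    have /= := cB (Ordinal Hi); rewrite in_itv /= => /andP [h1 h2].
    rewrite -[i]/(nat_of_ord (Ordinal Hi)) coords_ord.
    by split; apply/RleP.
  rewrite coords_out; last by rewrite -leqNgt.
  split; apply/RleP; rewrite ?lerN10 ?ler01 //.
move=> u Hu; rewrite -Qf_rv; apply/RleP; apply: cmax.
exact/mem_set/inK.
Qed.

End RayleighCompact.

Lemma normalize_in_box n A v : 0 < Nq n v ->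
  exists u, unit_in_box n u /\ Qf n A v = Qf n A u * Nq n v.
Proof.
  intros HN.
  set (s := sqrt (Nq n v)).
  assert (Hs : 0 < s) by (apply sqrt_lt_R0; lra).
  assert (Hss : s * s = Nq n v) by (apply sqrt_sqrt; lra).
  set (u := fun i => if Nat.ltb i n then v i / s else 0).
  assert (Hu : forall i, (i < n)%nat -> u i = / s * v i).
  { intros i Hi. unfold u. destruct (Nat.ltb_spec i n); [field; lra | lia]. }
  assert (HNu : Nq n u = 1).
  { unfold Nq. rewrite (sumR_ext n _ (fun i => / (s * s) * (v i * v i))).
    - rewrite sumR_scal. fold (Nq n v). rewrite <- Hss. field. lra.
    - intros i Hi. rewrite Hu by exact Hi. field. lra. }
  exists u. split; [split; [exact HNu|]|].
  - intros i. destruct (Nat.ltb_spec i n) as [Hi|Hi].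
    + assert (u i * u i <= 1).
      { rewrite <- HNu. apply (sumR_ge_term n (fun i => u i * u i)); auto. intros; nra. }
      split; nra.
    + unfold u. destruct (Nat.ltb_spec i n); [lia|lra].
  - unfold Qf. rewrite <- Hss, Rmult_comm, <- sumR_scal. apply sumR_ext. intros i Hi.
    rewrite Hu by exact Hi.
    rewrite (sumR_ext n (fun j => A i j * u j) (fun j => / s * (A i j * v j))),
      sumR_scal by (intros j Hj; rewrite Hu by exact Hj; ring).
    field. lra.
Qed.

Lemma rayleigh_max_exists n A : (0 < n)%nat ->
  exists w, Nq n w = 1 /\ forall v, Qf n A v <= Qf n A w * Nq n v.
Proof.
  intros Hn.
  set (e0 := fun i => if Nat.eqb 0 i then 1 else 0).
  assert (He0 : unit_in_box n e0).
  { split.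
    - unfold Nq. rewrite (sumR_ext n _ (fun j => if Nat.eqb 0 j then (fun _ => 1) j else 0)).
      + apply sumR_delta; lia.
      + intros j Hj. unfold e0. destruct (Nat.eqb 0 j); lra.
    - intros i. unfold e0. destruct (Nat.eqb 0 i); lra. }
  destruct (RayleighCompact.quad_form_max n A e0 He0) as [w [[Hw1 _] Hmax]].
  exists w. split; [exact Hw1|]. intros v.
  assert (HN0 : 0 <= Nq n v) by (apply sumR_nonneg; intros; nra).
  destruct (Req_dec (Nq n v) 0) as [HN|HN].
  - assert (Hv : forall i, (i < n)%nat -> v i = 0).
    { intros i Hi. assert (v i * v i = 0) by
        (apply (sumR_zero_each n (fun i => v i * v i)); auto; intros; nra).
      nra. }
    unfold Qf at 1. rewrite (sumR_ext n _ (fun _ => 0)), sumR_zero, HN; [lra|].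
    intros i Hi. rewrite Hv by exact Hi. lra.
  - destruct (normalize_in_box n A v ltac:(lra)) as [u [Hu ->]].
    apply Rmult_le_compat_r; [lra | exact (Hmax u Hu)].
Qed.

Lemma first_variation_zero g c : (forall t, 2 * t * g <= t * t * c) -> g = 0.
Proof.
  intros H.
  set (k := Rabs c + 1).
  assert (Hk : 0 < k) by (unfold k; pose proof (Rabs_pos c); lra).
  assert (Hck : c < k) by (unfold k; pose proof (Rle_abs c); lra).
  set (t := g / k).
  assert (Hg : g = t * k) by (unfold t; field; lra).
  specialize (H t). rewrite Hg in H |- *.
  assert (Hneg : t * t * (2 * k - c) <= 0) by nra.
  assert (Htt : t * t = 0) by (pose proof (Rle_0_sqr t); unfold Rsqr in *; nra).
  assert (Ht : t = 0) by nra. rewrite Ht. ring.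
Qed.

Lemma quad_form_line n A w i t : (i < n)%nat ->
  (forall j, (j < n)%nat -> A i j = A j i) ->
  Qf n A (fun k => w k + t * (if Nat.eqb i k then 1 else 0)) =
  Qf n A w + 2 * t * sumR n (fun j => A i j * w j) + t * t * A i i.
Proof.
  intros Hi Hs. set (X := fun k => sumR n (fun j => A k j * w j)).
  unfold Qf.
  rewrite (sumR_ext n _ (fun k => w k * X k + t * (w k * A i k)
                                 + t * (if Nat.eqb i k then X k else 0)
                                 + t * t * (if Nat.eqb i k then A k i else 0))).
  - rewrite !sumR_plus, !sumR_scal, !sumR_delta by exact Hi.
    rewrite (sumR_ext n (fun k => w k * A i k) (fun k => A i k * w k)) by (intros; ring).
    unfold X. ring.
  - intros k Hk.
    rewrite (sumR_ext n _ (fun j => A k j * w j + t * (if Nat.eqb i j then A k j else 0))).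
    + rewrite sumR_plus, sumR_scal, sumR_delta by exact Hi. fold (X k).
      rewrite <- (Hs k Hk). destruct (Nat.eqb i k); ring.
    + intros j Hj. destruct (Nat.eqb i j); ring.
Qed.

Lemma sq_norm_line n w i t : (i < n)%nat ->
  Nq n (fun k => w k + t * (if Nat.eqb i k then 1 else 0)) = Nq n w + 2 * t * w i + t * t.
Proof.
  intros Hi. unfold Nq.
  rewrite (sumR_ext n _ (fun k => w k * w k + 2 * t * (if Nat.eqb i k then w k else 0)
                                   + t * t * (if Nat.eqb i k then (fun _ => 1) k else 0))).
  - rewrite !sumR_plus, !sumR_scal, !sumR_delta by exact Hi. ring.
  - intros k Hk. destruct (Nat.eqb i k); ring.
Qed.

Lemma rayleigh_maximizer_eigenvector n (A : nat -> nat -> R) mu w :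
  (forall i j, (i < n)%nat -> (j < n)%nat -> A i j = A j i) ->
  (forall v, Qf n A v <= mu * Nq n v) -> Qf n A w = mu * Nq n w ->
  forall i, (i < n)%nat -> sumR n (fun j => A i j * w j) = mu * w i.
Proof.
  intros Hs Hle Heq i Hi.
  enough (sumR n (fun j => A i j * w j) - mu * w i = 0) by lra.
  apply (first_variation_zero _ (mu - A i i)). intros t.
  specialize (Hle (fun k => w k + t * (if Nat.eqb i k then 1 else 0))).
  rewrite quad_form_line, sq_norm_line in Hle by (auto; intros; apply Hs; auto).
  nra.
Qed.

Lemma top_eigenvalue n A : (0 < n)%nat ->
  (forall i j, (i < n)%nat -> (j < n)%nat -> A i j = A j i) ->
  exists mu, is_eigenvalue n A mu /\ forall v, Qf n A v <= mu * Nq n v.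
Proof.
  intros Hn Hs. destruct (rayleigh_max_exists n A Hn) as [w [Hw1 Hmax]].
  exists (Qf n A w).
  assert (Hbound : forall v, Qf n A v <= Qf n A w * Nq n v) by exact Hmax.
  split; [|exact Hbound].
  exists w. split.
  - apply NNPP. intros Hzero. enough (Nq n w = 0) by lra.
    unfold Nq. rewrite (sumR_ext n _ (fun _ => 0)); [apply sumR_zero|].
    intros i Hi. destruct (Req_dec (w i) 0) as [->|Hne]; [ring|].
    exfalso. apply Hzero. exists i. auto.
  - apply rayleigh_maximizer_eigenvector; auto. rewrite Hw1. ring.
Qed.

Lemma spectral_radius_ge_of_supervector n A rho y b : (0 < n)%nat ->
  (forall i j, (i < n)%nat -> (j < n)%nat -> A i j = A j i) ->
  is_spectral_radius n A rho ->
  (forall i, (i < n)%nat -> 0 < y i) ->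
  (forall i, (i < n)%nat -> b * y i <= sumR n (fun j => A i j * y j)) ->
  b <= rho /\ (rho = b -> forall i, (i < n)%nat -> sumR n (fun j => A i j * y j) = b * y i).
Proof.
  intros Hn Hs [Hub _] Hy Hsuper.
  destruct (top_eigenvalue n A Hn Hs) as [mu [Hmu Hmax]].
  assert (Hmurho : mu <= rho).
  { eapply Rle_trans; [apply Rle_abs|]. apply Hub. exists mu. auto. }
  assert (HNy : 0 < Nq n y).
  { pose proof (Hy 0%nat Hn).
    assert (y 0%nat * y 0%nat <= Nq n y) by
      (apply (sumR_ge_term n (fun i => y i * y i)); [intros i Hi; pose proof (Hy i Hi); nra | lia]).
    nra. }
  assert (HQy : b * Nq n y <= Qf n A y).
  { unfold Qf, Nq. rewrite <- sumR_scal. apply sumR_le. intros i Hi.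
    pose proof (Hy i Hi). pose proof (Hsuper i Hi). nra. }
  pose proof (Hmax y).
  assert (Hbmu : b <= mu) by nra.
  split; [lra|]. intros Heq.
  apply rayleigh_maximizer_eigenvector; auto.
  - intros v. pose proof (Hmax v). assert (0 <= Nq n v) by (apply sumR_nonneg; intros; nra). nra.
  - assert (mu = b) by lra. subst mu. lra.
Qed.

Lemma eigenvalue_le_of_positive_eigenvector n (A : nat -> nat -> R) y b lam v : (0 < n)%nat ->
  (forall i j, (i < n)%nat -> (j < n)%nat -> 0 <= A i j) ->
  (forall i, (i < n)%nat -> 0 < y i) ->
  (forall i, (i < n)%nat -> sumR n (fun j => A i j * y j) = b * y i) ->
  (exists i, (i < n)%nat /\ v i <> 0) ->
  (forall i, (i < n)%nat -> sumR n (fun j => A i j * v j) = lam * v i) ->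
  Rabs lam <= b.
Proof.
  intros Hn HA Hy Hb [i1 [Hi1 Hv1]] Hev.
  destruct (argmax n (fun i => Rabs (v i) / y i) Hn) as [i0 [Hi0 Hm]].
  set (c := Rabs (v i0) / y i0).
  pose proof (Hy i0 Hi0) as Hy0.
  assert (Hvj : forall j, (j < n)%nat -> Rabs (v j) <= c * y j).
  { intros j Hj. specialize (Hm j Hj). pose proof (Hy j Hj). fold c in Hm.
    apply (Rmult_le_compat_r (y j)) in Hm; [|lra].
    unfold Rdiv in Hm. rewrite Rmult_assoc, Rinv_l in Hm by lra. lra. }
  assert (Hvi0 : Rabs (v i0) = c * y i0) by (unfold c; field; lra).
  assert (Hpos : 0 < Rabs (v i0)).
  { pose proof (Hvj i1 Hi1). pose proof (Rabs_pos_lt _ Hv1). pose proof (Hy i1 Hi1). nra. }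
  assert (Rabs lam * Rabs (v i0) <= b * Rabs (v i0)).
  { rewrite <- Rabs_mult, <- (Hev i0 Hi0).
    eapply Rle_trans; [apply sumR_abs|].
    apply Rle_trans with (sumR n (fun j => c * (A i0 j * y j))).
    - apply sumR_le. intros j Hj.
      rewrite Rabs_mult, (Rabs_right (A i0 j)) by (apply Rle_ge, HA; auto).
      pose proof (Hvj j Hj). pose proof (HA i0 j Hi0 Hj). nra.
    - rewrite sumR_scal, Hb, Hvi0 by exact Hi0. lra. }
  apply (Rmult_le_reg_r (Rabs (v i0))); auto.
Qed.

Lemma spectral_radius_le_of_positive_eigenvector n A rho y b : (0 < n)%nat ->
  (forall i j, (i < n)%nat -> (j < n)%nat -> 0 <= A i j) ->
  is_spectral_radius n A rho ->
  (forall i, (i < n)%nat -> 0 < y i) ->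
  (forall i, (i < n)%nat -> sumR n (fun j => A i j * y j) = b * y i) ->
  rho <= b.
Proof.
  intros Hn HA [_ Hleast] Hy Hb. apply Hleast.
  intros r [lam [[v [Hv Hev]] ->]].
  exact (eigenvalue_le_of_positive_eigenvector n A y b lam v Hn HA Hy Hb Hv Hev).
Qed.

Lemma walkb_S n adj k i j : walkb n adj (S k) i j = true <->
  exists m, (m < n)%nat /\ adj i m = true /\ walkb n adj k m j = true.
Proof.
  simpl. rewrite existsb_exists. split.
  - intros [m [Hm H]]. apply in_seq in Hm. apply andb_true_iff in H. exists m. split; [lia|tauto].
  - intros [m [Hm [H1 H2]]]. exists m. split; [apply in_seq; lia|]. apply andb_true_iff; auto.
Qed.

Lemma walk_concat n adj k l i m j :
  walkb n adj k i m = true -> walkb n adj l m j = true -> walkb n adj (k + l) i j = true.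
Proof.
  revert i. induction k; intros i H1 H2.
  - apply Nat.eqb_eq in H1. subst. exact H2.
  - apply walkb_S in H1. destruct H1 as [m1 [Hm1 [Ha Hw]]].
    apply walkb_S. exists m1. repeat split; auto.
Qed.

Lemma walk_rev n adj k i j : simple_graph n adj -> (i < n)%nat -> (j < n)%nat ->
  walkb n adj k i j = true -> walkb n adj k j i = true.
Proof.
  intros [Hsym _]. revert i. induction k; intros i Hi Hj H.
  - apply Nat.eqb_eq in H. subst. apply Nat.eqb_refl.
  - apply walkb_S in H. destruct H as [m [Hm [Ha Hw]]].
    assert (Hback : walkb n adj 1 m i = true).
    { apply walkb_S. exists i. rewrite Hsym by auto. repeat split; auto. apply Nat.eqb_refl. }
    replace (S k) with (k + 1)%nat by lia. eapply walk_concat; eauto.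
Qed.

Lemma Dmat_sym n adj : simple_graph n adj -> forall i j, (i < n)%nat -> (j < n)%nat ->
  Dmat n adj i j = Dmat n adj j i.
Proof.
  intros Hg i j Hi Hj. unfold Dmat, Defs.dist. f_equal.
  assert (Hw : forall k, walkb n adj k i j = walkb n adj k j i).
  { intros k. destruct (walkb n adj k i j) eqn:E1, (walkb n adj k j i) eqn:E2; auto.
    - apply walk_rev in E1; auto. congruence.
    - apply walk_rev in E2; auto. congruence. }
  assert (Hf : forall fuel k, first_walk n adj i j k fuel = first_walk n adj j i k fuel).
  { induction fuel; intros k; simpl; [reflexivity|]. rewrite Hw, IHfuel. reflexivity. }
  apply Hf.
Qed.

Lemma Dmat_nonneg n adj i j : 0 <= Dmat n adj i j.
Proof. apply pos_INR. Qed.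

Lemma Dmat_diag n adj i : (0 < n)%nat -> Dmat n adj i i = 0.
Proof.
  intros Hn. unfold Dmat, Defs.dist. destruct n; [lia|]. simpl. rewrite Nat.eqb_refl. reflexivity.
Qed.

Lemma first_walk_ge n adj i j k fuel : (k <= first_walk n adj i j k fuel)%nat.
Proof.
  revert k. induction fuel; intros k; simpl; [lia|].
  destruct (walkb n adj k i j); [lia|]. specialize (IHfuel (S k)). lia.
Qed.

Lemma Dmat_off_diag n adj i j : (0 < n)%nat -> i <> j -> 1 <= Dmat n adj i j.
Proof.
  intros Hn Hij. unfold Dmat, Defs.dist. destruct n; [lia|]. simpl.
  destruct (Nat.eqb_spec i j); [lia|]. apply (le_INR 1), first_walk_ge.
Qed.

Definition scale n adj a i : R := Rpower (transmission n adj i) a.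

Lemma scale_pos n adj a i : 0 < scale n adj a i.
Proof. apply exp_pos. Qed.

Lemma qratio_nonneg n adj a i j : 0 <= qratio n adj a i j.
Proof.
  pose proof (scale_pos n adj a i). pose proof (scale_pos n adj a j).
  pose proof (Dmat_nonneg n adj i j).
  unfold qratio; fold (scale n adj a i) (scale n adj a j). unfold Rdiv. apply Rmult_le_pos; [nra | left; apply Rinv_0_lt_compat; auto].
Qed.

Lemma qratio_diag n adj a i : (0 < n)%nat -> qratio n adj a i i = 0.
Proof. intros Hn. unfold qratio. rewrite Dmat_diag by exact Hn. unfold Rdiv. ring. Qed.

Lemma gen_avg_trans_row_sum n adj a i :
  gen_avg_trans n adj a i = sumR n (qratio n adj a i).
Proof.
  unfold gen_avg_trans, qratio, Rdiv. rewrite Rmult_comm, <- sumR_scal.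
  apply sumR_ext. intros. ring.
Qed.

Lemma gen_avg_trans_pos n adj a i : (2 <= n)%nat -> (i < n)%nat -> 0 < gen_avg_trans n adj a i.
Proof.
  intros Hn Hi. set (j := if Nat.eqb i 0 then 1%nat else 0%nat).
  assert (Hj : (j < n)%nat /\ i <> j) by (unfold j; destruct (Nat.eqb_spec i 0); lia).
  rewrite gen_avg_trans_row_sum.
  assert (Hpos : 0 < qratio n adj a i j).
  { pose proof (scale_pos n adj a i). pose proof (scale_pos n adj a j).
    pose proof (Dmat_off_diag n adj i j ltac:(lia) (proj2 Hj)).
    unfold qratio; fold (scale n adj a i) (scale n adj a j). unfold Rdiv. apply Rmult_lt_0_compat; [nra | apply Rinv_0_lt_compat; auto]. }
  pose proof (sumR_ge_term n (qratio n adj a i) j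
                (fun k _ => qratio_nonneg n adj a i k) (proj1 Hj)). lra.
Qed.

Lemma Dmat_scaled n adj a z i :
  sumR n (fun j => Dmat n adj i j * (scale n adj a j * z j)) =
  scale n adj a i * sumR n (fun j => qratio n adj a i j * z j).
Proof.
  rewrite <- sumR_scal. apply sumR_ext. intros j Hj.
  pose proof (scale_pos n adj a i). unfold qratio. fold (scale n adj a i) (scale n adj a j).
  field. lra.
Qed.

Lemma list_min_le l y : In y l -> list_min l <= y.
Proof.
  unfold list_min. generalize (hd 0 l). intros h.
  induction l as [|x l IH]; simpl; [tauto|]. intros [->|H].
  - apply Rmin_l.
  - eapply Rle_trans; [apply Rmin_r | auto].
Qed.

Lemma list_min_nonneg l : (forall y, In y l -> 0 <= y) -> 0 <= list_min l.
Proof.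
  intros H. unfold list_min. assert (Hh : 0 <= hd 0 l).
  { destruct l; simpl; [lra|]. apply H. left; reflexivity. }
  revert Hh. generalize (hd 0 l). intros h Hh.
  induction l as [|x l IH]; simpl; auto. apply Rmin_glb; auto with datatypes.
Qed.

Lemma Tmin_le n adj a i j : (i < n)%nat -> (j < n)%nat -> i <> j ->
  Tmin n adj a <= qratio n adj a i j.
Proof.
  intros Hi Hj Hij. apply list_min_le.
  apply in_flat_map. exists i. split; [apply in_seq; lia|].
  apply in_map_iff. exists j. split; auto. apply filter_In. split; [apply in_seq; lia|].
  destruct (Nat.eqb_spec i j); [lia | reflexivity].
Qed.

Lemma Tmin_nonneg n adj a : 0 <= Tmin n adj a.
Proof.
  apply list_min_nonneg. intros y Hy.
  apply in_flat_map in Hy. destruct Hy as [i [_ Hy]]. apply in_map_iff in Hy.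
  destruct Hy as [j [<- _]]. apply qratio_nonneg.
Qed.

(* For a matrix B with zero diagonal, off-diagonal
   entries >= T >= 0 and row sums M_0 >= ... >= M_(n-1) > 0, the bound b is
   the positive root of b (b + T) = M_(n-1) b + T (M_(n-1) + S) where
   S = sum_(k < n-1) (M_k - M_(n-1)). *)

Definition lower_bound n (M : nat -> R) (T : R) : R :=
  let Mn := M (n - 1)%nat in
  (Mn - T + sqrt ((Mn + T) ^ 2 + 4 * T * sumR (n - 1) (fun k => M k - Mn))) / 2.

Definition test_vector n (M : nat -> R) (T : R) (j : nat) : R :=
  1 + (M j - M (n - 1)%nat) / (lower_bound n M T + T).

Definition slack n (B : nat -> nat -> R) (M : nat -> R) (T : R) (i : nat) : R :=
  sumR n (fun j => (if Nat.eqb i j then 0 else B i j - T) * (M j - M (n - 1)%nat)).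

Section TestVector.
Variables (n : nat) (B : nat -> nat -> R) (M : nat -> R) (T : R).
Hypothesis Hn : (0 < n)%nat.
Hypothesis Hrow : forall i, (i < n)%nat -> M i = sumR n (B i).
Hypothesis Hdiag : forall i, (i < n)%nat -> B i i = 0.
Hypothesis Hoff : forall i j, (i < n)%nat -> (j < n)%nat -> i <> j -> T <= B i j.
Hypothesis HT : 0 <= T.
Hypothesis Hsorted : forall i j, (i <= j)%nat -> (j < n)%nat -> M j <= M i.
Hypothesis HMpos : 0 < M (n - 1)%nat.

Let Mn := M (n - 1)%nat.
Let excess := sumR (n - 1) (fun k => M k - Mn).
Let b := lower_bound n M T.

Lemma excess_nonneg : 0 <= excess.
Proof. apply sumR_nonneg. intros i Hi. unfold Mn. pose proof (Hsorted i (n - 1) ltac:(lia) ltac:(lia)). lra. Qed.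

Lemma excess_full : sumR n (fun k => M k - Mn) = excess.
Proof. unfold excess. replace n with (S (n - 1)) at 1 by lia. rewrite sumR_S. unfold Mn. lra. Qed.

Lemma lower_bound_spec : Mn <= b /\ b * (b + T) = Mn * b + T * (Mn + excess).
Proof.
  pose proof excess_nonneg as HS. unfold b, lower_bound. fold Mn excess.
  assert (HTS : 0 <= T * excess) by (apply Rmult_le_pos; assumption).
  assert (Hdisc : 0 <= (Mn + T) ^ 2 + 4 * T * excess) by (pose proof (pow2_ge_0 (Mn + T)); lra).
  pose proof (sqrt_sqrt _ Hdisc) as Hsq.
  pose proof (sqrt_pos ((Mn + T) ^ 2 + 4 * T * excess)) as Hsqrt0.
  set (s := sqrt ((Mn + T) ^ 2 + 4 * T * excess)) in *.
  assert (Hs : Mn + T <= s) by (unfold Mn in *; nra).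
  split; nra.
Qed.

Lemma test_vector_pos j : (j < n)%nat -> 0 < test_vector n M T j.
Proof.
  intros Hj. destruct lower_bound_spec as [Hb _].
  pose proof (Hsorted j (n - 1) ltac:(lia) ltac:(lia)) as Hj_min.
  unfold test_vector. fold b. fold Mn in Hj_min |- *.
  assert (0 <= (M j - Mn) / (b + T))
    by (unfold Rdiv; apply Rmult_le_pos; [|left; apply Rinv_0_lt_compat]; unfold Mn in *; lra). lra.
Qed.

Lemma slack_nonneg i : (i < n)%nat -> 0 <= slack n B M T i.
Proof.
  intros Hi. apply sumR_nonneg. intros j Hj.
  pose proof (Hsorted j (n - 1) ltac:(lia) ltac:(lia)).
  destruct (Nat.eqb_spec i j) as [|Hij]; [lra|]. pose proof (Hoff i j Hi Hj Hij). nra.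
Qed.

Lemma test_vector_image i : (i < n)%nat ->
  sumR n (fun j => B i j * test_vector n M T j) =
  b * test_vector n M T i + slack n B M T i / (b + T).
Proof.
  intros Hi. destruct lower_bound_spec as [Hb Hroot].
  set (P := sumR n (fun j => B i j * (M j - Mn))).
  assert (HBz : sumR n (fun j => B i j * test_vector n M T j) = M i + / (b + T) * P).
  { rewrite (sumR_ext n _ (fun j => B i j + / (b + T) * (B i j * (M j - Mn)))).
    - rewrite sumR_plus, sumR_scal, <- Hrow by exact Hi. reflexivity.
    - intros j Hj. unfold test_vector. fold b Mn. field. unfold Mn in *. lra. }
  assert (HE : slack n B M T i = P - T * excess + T * (M i - Mn)).
  { unfold slack. fold Mn.
    rewrite (sumR_ext n _ (fun j => (B i j * (M j - Mn) - T * (M j - Mn))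
               + (if Nat.eqb i j then (fun j => (T - B i j) * (M j - Mn)) j else 0))).
    - rewrite sumR_plus, sumR_minus, sumR_scal, sumR_delta, excess_full, Hdiag by exact Hi.
      fold P. ring.
    - intros j Hj. destruct (Nat.eqb_spec i j); [subst; rewrite Hdiag by exact Hj|]; ring. }
  rewrite HBz, HE. unfold test_vector. fold b Mn.
  apply (Rmult_eq_reg_r (b + T)); [|unfold Mn in *; lra].
  field_simplify; [|unfold Mn in *; lra..]. nra.
Qed.

Lemma slack_zero_iff :
  (forall i, (i < n)%nat -> slack n B M T i = 0) <->
  ((forall k, (k < n)%nat -> M k = Mn) \/
   (exists t, (2 <= t)%nat /\ (t <= n)%nat /\
      (forall k l, (k < n)%nat -> (l < t - 1)%nat -> k <> l -> B k l = T) /\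
      (forall k, (t - 1 <= k)%nat -> (k < n)%nat -> M k = Mn))).
Proof.
  assert (Hmin : forall j, (j < n)%nat -> Mn <= M j)
    by (intros j Hj; apply Hsorted; lia).
  split.
  - intros Hzero.
    assert (Hterm : forall k l, (k < n)%nat -> (l < n)%nat -> k <> l ->
              (B k l - T) * (M l - Mn) = 0).
    { intros k l Hk Hl Hkl.
      assert (Hnn : forall j, (j < n)%nat ->
        0 <= (if Nat.eqb k j then 0 else B k j - T) * (M j - Mn)).
      { intros j Hj. pose proof (Hmin j Hj). destruct (Nat.eqb_spec k j) as [|Hkj]; [lra|].
        pose proof (Hoff k j Hk Hj Hkj). nra. }
      pose proof (sumR_zero_each n _ Hnn (Hzero k Hk) l Hl) as Hkl0. simpl in Hkl0.
      destruct (Nat.eqb_spec k l); [lia | exact Hkl0]. }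
    destruct (dec_inh_nat_subset_has_unique_least_element (fun p => M p = Mn))
      as [p [[Hp Hleast] _]].
    { intros p. apply classic. }
    { exists (n - 1)%nat. reflexivity. }
    assert (Hpn : (p <= n - 1)%nat) by (apply Hleast; reflexivity).
    destruct (Nat.eq_dec p 0) as [->|Hp0].
    + left. intros k Hk. pose proof (Hmin k Hk). pose proof (Hsorted 0 k ltac:(lia) Hk). lra.
    + right. exists (S p). replace (S p - 1)%nat with p by lia.
      repeat split; try lia.
      * intros k l Hk Hl Hkl. pose proof (Hterm k l Hk ltac:(lia) Hkl) as H0.
        apply Rmult_integral in H0. destruct H0 as [H0|H0]; [lra|].
        assert (Hle : (p <= l)%nat) by (apply Hleast; lra). lia.
      * intros k Hpk Hk. pose proof (Hmin k Hk). pose proof (Hsorted p k Hpk Hk). lra.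
  - intros Hcase i Hi. unfold slack. fold Mn.
    rewrite (sumR_ext n _ (fun _ => 0)); [apply sumR_zero|].
    intros j Hj. destruct Hcase as [Hall|[t [Ht2 [Htn [HB HM]]]]].
    + rewrite (Hall j Hj). ring.
    + destruct (Nat.lt_ge_cases j (t - 1)) as [Hjt|Hjt].
      * destruct (Nat.eqb_spec i j) as [|Hij]; [ring|]. rewrite (HB i j Hi Hjt Hij). ring.
      * rewrite (HM j Hjt Hj). ring.
Qed.

End TestVector.

(* Vertices are 0..n-1 (paper's vertex v_k is index k-1). *)
Theorem theorem6 (n : nat) (adj : nat -> nat -> bool) (a rho : R)
  (Hn : (2 <= n)%nat)
  (Hg : simple_graph n adj)
  (Hc : connected n adj)
  (Hord : forall i j, (i <= j)%nat -> (j < n)%nat ->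
            gen_avg_trans n adj a j <= gen_avg_trans n adj a i)
  (Hrho : is_spectral_radius n (Dmat n adj) rho) :
  let M := gen_avg_trans n adj a in
  let T := Tmin n adj a in
  let Mn := M (n - 1)%nat in
  let bound := (Mn - T + sqrt ((Mn + T) ^ 2
                  + 4 * T * sumR (n - 1) (fun k => M k - Mn))) / 2 in
  rho >= bound /\
  (rho = bound <->
     ((forall k, (k < n)%nat -> M k = Mn) \/
      (exists t, (2 <= t)%nat /\ (t <= n)%nat /\
         (forall k l, (k < n)%nat -> (l < t - 1)%nat -> k <> l ->
            qratio n adj a k l = T) /\
         (forall k, (t - 1 <= k)%nat -> (k < n)%nat -> M k = Mn)))).
Proof.
  intros M T Mn bound. change bound with (lower_bound n M T). clear bound.
  set (B := qratio n adj a).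
  assert (Hrow : forall i, (i < n)%nat -> M i = sumR n (B i))
    by (intros; apply gen_avg_trans_row_sum).
  assert (Hdiag : forall i, (i < n)%nat -> B i i = 0) by (intros; apply qratio_diag; lia).
  assert (Hoff : forall i j, (i < n)%nat -> (j < n)%nat -> i <> j -> T <= B i j)
    by (intros; apply Tmin_le; auto).
  assert (HT : 0 <= T) by apply Tmin_nonneg.
  assert (HMpos : 0 < M (n - 1)%nat) by (apply gen_avg_trans_pos; lia).
  pose proof (lower_bound_spec n M T ltac:(lia) HT Hord HMpos) as [Hb _].
  set (b := lower_bound n M T) in *.
  set (y := fun j => scale n adj a j * test_vector n M T j).
  assert (Hy : forall j, (j < n)%nat -> 0 < y j).
  { intros j Hj. pose proof (scale_pos n adj a j).
    pose proof (test_vector_pos n M T ltac:(lia) HT Hord HMpos j Hj). unfold y. nra. }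
  assert (Hdy : forall i, (i < n)%nat -> sumR n (fun j => Dmat n adj i j * y j) =
            b * y i + scale n adj a i * / (b + T) * slack n B M T i).
  { intros i Hi. unfold y. rewrite Dmat_scaled. fold B.
    rewrite test_vector_image by (auto; lia). unfold b, Rdiv. ring. }
  assert (Hw : forall i, (i < n)%nat -> 0 < scale n adj a i * / (b + T)).
  { intros i Hi. pose proof (scale_pos n adj a i).
    apply Rmult_lt_0_compat; [|apply Rinv_0_lt_compat]; lra. }
  destruct (spectral_radius_ge_of_supervector n (Dmat n adj) rho y b ltac:(lia)
              (Dmat_sym n adj Hg) Hrho Hy) as [Hge Heq].
  { intros i Hi. rewrite Hdy by exact Hi. pose proof (Hw i Hi).
    pose proof (slack_nonneg n B M T ltac:(lia) Hoff Hord i Hi). nra. }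
  pose proof (slack_zero_iff n B M T ltac:(lia) Hoff Hord) as Hiff.
  split; [lra|]. split.
  - (* rho = b makes y an eigenvector, so every slack vanishes. *)
    intros Hrb. apply Hiff. intros i Hi. specialize (Heq Hrb i Hi).
    rewrite Hdy in Heq by exact Hi. pose proof (Hw i Hi). nra.
  - (* In the equality cases y is a positive eigenvector for b. *)
    intros Hcase. apply Rle_antisym; [|exact Hge].
    apply (spectral_radius_le_of_positive_eigenvector n (Dmat n adj) rho y b ltac:(lia)
             (fun i j _ _ => Dmat_nonneg n adj i j) Hrho Hy).
    intros i Hi. rewrite Hdy, (proj2 Hiff Hcase i Hi) by exact Hi. ring.
Qed.
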